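(* Let $R=\mathbb{C}[x_1,\ldots,x_n]$ with $n\geq 4$, let $d\geq 2$, and let $k$ be an integer with $\binom{n+d-1}{d}-n<k\leq \binom{n+d-1}{d}$. If $I$ is the ideal of $R$ generated by $k$ generic forms of degree $d$, then \[ H_{R/I}(t)=\left\lceil \frac{(1-t^d)^k}{(1-t)^n}\right\rceil . \]
   Context: A form of degree $d$ in $R$ is written $\sum_i\beta_i m_i$, where $m_i$ runs over the $\binom{n+d-1}{d}$ monic monomials of degree $d$; a family of forms is called generic if all the coefficients $\beta_i$ of all forms in the family are algebraically independent (over $\mathbb{Q}$). For a homogeneous ideal $I$, the Hilbert series is $H_{R/I}(t)=\sum_{i\geq 0}\dim_{\mathbb{C}}(R/I)_i\, t^i$. For a formal power series $F(t)=\sum_{i\geq 0}a_it^i$, define $\lceil F(t)\rceil=\sum_{i\geq 0}b_it^i$, where $b_i=a_i$ if $a_j>0$ for all $j\leq i$, and $b_i=0$ otherwise. *)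

From HB Require Import structures.
From mathcomp Require Import all_boot all_order all_algebra.
From mathcomp Require Import Rstruct.
From mathcomp Require Import complex.
From mathcomp Require Import mpoly.
Set Implicit Arguments. Unset Strict Implicit. Unset Printing Implicit Defensive.
Import GRing.Theory Num.Theory.
Local Open Scope ring_scope.

Definition CC : closedFieldType := complex Rdefinitions.R.

Definition deg_monom (n d : nat) := {m : 'X_{1..n < d.+1} | mdeg m == d}.

Definition alg_indep_Q (I : finType) (z : I -> CC) : Prop :=
  forall p : {mpoly rat[#|I|]}, p != 0 ->
    (map_mpoly (ratr : rat -> CC) p).@[fun l => z (enum_val l)] != 0.

Definition generic_forms (n d k : nat) (f : 'I_k -> {mpoly CC[n]}) : Prop :=
  (forall j, f j \is d.-homog) /\
  alg_indep_Q (fun jm : 'I_k * deg_monom n d => (f jm.1)@_(val (val jm.2))).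

Definition in_ideal (n k : nat) (f : 'I_k -> {mpoly CC[n]}) (p : {mpoly CC[n]}) :
  Prop := exists q : 'I_k -> {mpoly CC[n]}, p = \sum_(j < k) q j * f j.

Definition indep_mod (n k : nat) (f : 'I_k -> {mpoly CC[n]}) (i m : nat)
  (g : 'I_m -> {mpoly CC[n]}) : Prop :=
  (forall l, g l \is i.-homog) /\
  (forall c : 'I_m -> CC, in_ideal f (\sum_(l < m) c l *: g l) ->
     forall l, c l = 0).

(* dim_C (R/I)_i = a, where I = (f_1,...,f_k): (R/I)_i = R_i / (I cap R_i),
   so its dimension is the maximal size of a family of degree-i forms that is
   linearly independent modulo I. *)
Definition hilb_dim (n k : nat) (f : 'I_k -> {mpoly CC[n]}) (i a : nat) : Prop :=
  (exists g : 'I_a -> {mpoly CC[n]}, indep_mod f i g) /\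
  (forall g : 'I_a.+1 -> {mpoly CC[n]}, ~ indep_mod f i g).

(* Coefficient of t^i in the power series (1 - t^d)^k / (1 - t)^n, using
   1/(1-t)^n = sum_l binom(n-1+l, n-1) t^l. *)
Definition series_coef (n d k i : nat) : int :=
  \sum_(j < i.+1)
     (((1 - 'X^d) ^+ k : {poly int})`_j * ('C(n.-1 + (i - j), n.-1))%:Z).

(* The i-th coefficient of ceil(F) for F = sum_i a_i t^i. *)
Definition ceil_coef (a : nat -> int) (i : nat) : int :=
  if [forall j : 'I_i.+1, 0 < a j] then a i else 0.

From HB Require Import structures.
From mathcomp Require Import all_boot all_order all_algebra.
From mathcomp Require Import Rstruct complex mpoly.
From mathcomp Require Import zify ring.
Import GRing.Theory Num.Theory.
Local Open Scope ring_scope.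
Set Implicit Arguments. Unset Strict Implicit. Unset Printing Implicit Defensive.

(* Let N be the number of monomials of degree d. Below degree d the ideal is
   zero. In degree d it is spanned by the k forms; a k x k minor of their
   coefficient matrix becomes the identity when the forms are specialised to k
   distinct monomials, so it is invertible for generic forms and the quotient
   has dimension N - k. In degree d + 1 the bound N - k < n lets one attach to
   each form f_j a monomial T_j of degree d such that every monomial of degree
   d + 1 is some x_v T_j; the coefficient matrix of suitable products x_v f_j is
   the identity at f_j = T_j, hence invertible generically, so the ideal
   contains every form of degree > d. Specialisation suffices because a
   determinant that is a nonzero polynomial over Q cannot vanish at
   algebraically independent coefficients. Finally the series has coefficients
   C(n - 1 + i, i) for i < d, N - k at d, and C(n + d, d + 1) - k n <= 0 at
   d + 1. *)

Lemma row_dependent (F : fieldType) m q (A : 'M[F]_(m, q)) : (q < m)%N ->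
  exists2 u : 'rV_m, u != 0 & u *m A = 0.
Proof.
move=> lt_qm; have : kermx A != 0.
  by rewrite kermx_eq0 -row_leq_rank -ltnNge (leq_ltn_trans (rank_leq_col A)).
by case/rowV0Pn => u /sub_kermxP uA u_neq0; exists u.
Qed.

Section Monomials.
Variable n : nat.

Definition mon e (t : deg_monom n e) : 'X_{1..n} := val (val t).

Lemma mdeg_mon e (t : deg_monom n e) : mdeg (mon t) = e.
Proof. by case: t => t /= /eqP ->. Qed.

Lemma mon_inj e : injective (@mon e).
Proof. by move=> t1 t2 /val_inj/val_inj. Qed.

Definition deg_monom_of e (m : 'X_{1..n}) (me : mdeg m == e) : deg_monom n e :=
  exist _ (BMultinom (eq_leq (f_equal S (eqP me)) : mdeg m < e.+1)%N) me.

Lemma mon_deg_monom_of e m (me : mdeg m == e) : mon (deg_monom_of me) = m.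
Proof. by []. Qed.

Lemma monP e m : mdeg m = e -> exists t : deg_monom n e, mon t = m.
Proof. by move=> /eqP me; exists (deg_monom_of me). Qed.

Lemma mnm_split (m : 'X_{1..n}) e : (e <= mdeg m)%N ->
  exists m1 m2, m = (m1 + m2)%MM /\ mdeg m1 = e.
Proof.
elim: e => [|e IH] le_em; first by exists 0%MM, m; rewrite add0m mdeg0.
have [m1 [m2 [em m1e]]] := IH (ltnW le_em); rewrite {}em in le_em *.
have [i m2i] : exists i, m2 i != 0%N.
  apply/existsP; apply: contraTT le_em; rewrite negb_exists => /forallP m20.
  have -> : m2 = 0%MM by apply/mnmP => i; rewrite mnm0E; apply/eqP/negPn/m20.
  by rewrite addm0 m1e ltnn.
have le_im2 : (U_(i) <= m2)%MM by rewrite lep1mP.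
exists (m1 + U_(i))%MM, (m2 - U_(i))%MM; split.
  by rewrite -addmA [(U_(i) + _)%MM]addmC submK.
by rewrite mdegD mdeg1 m1e addn1.
Qed.

Variable R : ringType.
Implicit Types (p q : {mpoly R[n]}).

Definition coefrow e p : 'rV[R]_#|{: deg_monom n e}| :=
  \row_r p@_(mon (enum_val r)).

Definition coefmx e a (g : 'I_a -> {mpoly R[n]}) : 'M[R]_(a, #|{: deg_monom n e}|) :=
  \matrix_(l, r) (g l)@_(mon (enum_val r)).

Lemma coefrowE e p t : coefrow e p 0 (enum_rank t) = p@_(mon t).
Proof. by rewrite mxE enum_rankK. Qed.

Lemma coefrow0 e : coefrow e 0 = 0.
Proof. by apply/rowP => r; rewrite !mxE mcoeff0. Qed.

Lemma coefrow_inj e : {in e.-homog &, injective (coefrow e)}.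
Proof.
move=> p q hp hq /rowP pq; apply/mpolyP => m.
case: (eqVneq (mdeg m) e) => [/monP [t <-]|ne].
  by have := pq (enum_rank t); rewrite !coefrowE.
by rewrite (dhomog_nemf_coeff hp ne) (dhomog_nemf_coeff hq ne).
Qed.

Lemma coefrow_lincomb e a (g : 'I_a -> {mpoly R[n]}) (u : 'rV[R]_a) :
  coefrow e (\sum_l u 0 l *: g l) = u *m coefmx e g.
Proof.
apply/rowP => r; rewrite !mxE raddf_sum /=; apply: eq_bigr => l _.
by rewrite mcoeffZ mxE.
Qed.

Lemma coefrow_monomial e (t : deg_monom n e) :
  coefrow e 'X_[mon t] = delta_mx 0 (enum_rank t).
Proof.
apply/rowP => r; rewrite !mxE mcoeffX eqxx /=.
by rewrite -(inj_eq enum_val_inj) enum_rankK (inj_eq (@mon_inj _)) eq_sym.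
Qed.

Lemma mcoeff_lincomb_monomials a (c : 'I_a -> R) (ms : 'I_a -> 'X_{1..n}) m :
  (\sum_l c l *: 'X_[ms l])@_m = \sum_(l | ms l == m) c l.
Proof.
rewrite raddf_sum [RHS]big_mkcond /=; apply: eq_bigr => l _.
by rewrite mcoeffZ mcoeffX; case: eqP; rewrite ?mulr1 ?mulr0.
Qed.

Lemma mcoeff_lincomb_monomials_inj a (c : 'I_a -> R) (ms : 'I_a -> 'X_{1..n}) l0 :
  injective ms -> (\sum_l c l *: 'X_[ms l])@_(ms l0) = c l0.
Proof.
move=> ms_inj; rewrite mcoeff_lincomb_monomials (big_pred1 l0) // => l.
exact: inj_eq.
Qed.

Lemma mcoeffM_low d p q m : q \is d.-homog -> (mdeg m <= d)%N ->
  (p * q)@_m = p@_0%MM * q@_m.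
Proof.
move=> hq le_md; rewrite mcoeffM.
have h0 : (mdeg (0%MM : 'X_{1..n}) < (mdeg m).+1)%N by rewrite mdeg0.
pose k0 : 'X_{1..n < (mdeg m).+1, (mdeg m).+1} :=
  (BMultinom h0, @BMultinom n (mdeg m).+1 m (ltnSn _)).
rewrite (bigD1 k0) /=; last by rewrite add0m.
rewrite big1 ?addr0 // => -[m1 m2] /= /andP [/eqP em k_neq].
case: (eqVneq (mdeg m2) d) => [m2d|]; last first.
  by move/(dhomog_nemf_coeff hq) ->; rewrite mulr0.
have m10 : val m1 = 0%MM.
  have dm : mdeg m = (mdeg m1 + mdeg m2)%N by rewrite {1}em mdegD.
  have m1d0 : mdeg m1 = 0%N by lia.
  by apply/eqP; rewrite -mdeg_eq0 m1d0.
have m2m : val m2 = m by move: em; rewrite m10 add0m => /esym.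
by move/negP: k_neq; case; apply/eqP; congr pair; apply: val_inj.
Qed.

Lemma mcoeffXM (u m : 'X_{1..n}) p :
  ('X_[u] * p)@_m = if (u <= m)%MM then p@_(m - u)%MM else 0.
Proof.
case: ifP => le_um.
  by rewrite -(commr_mpolyX u p) -{1}(submK le_um) addmC mcoeffMX.
rewrite mcoeffM big1 // => kk /eqP em; rewrite mcoeffX.
case: eqP => [e|]; last by rewrite mul0r.
by exfalso; move: le_um; rewrite em e lem_addr.
Qed.

Lemma mcoeffXvM d p v m : mdeg m = d.+1 ->
  ('X_v * p)@_m = \sum_(t : deg_monom n d | (mon t + U_(v) == m)%MM) p@_(mon t).
Proof.
move=> md; rewrite mcoeffXM; case: ifP => [le_vm|nle_vm]; last first.
  by rewrite big_pred0 // => t; apply: contraFF nle_vm => /eqP <-; apply: lem_addl.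
have mvd : mdeg (m - U_(v))%MM == d.
  by move: md; rewrite -{1}(submK le_vm) mdegD mdeg1 addn1 => -[->].
rewrite (big_pred1 (deg_monom_of mvd)) // => t /=.
apply/eqP/eqP => [tvm|->]; last by rewrite mon_deg_monom_of submK.
by apply: mon_inj; rewrite mon_deg_monom_of -tvm addmK.
Qed.

End Monomials.

Lemma card_deg_monom n e : #|{: deg_monom n.+1 e}| = 'C(e + n, e).
Proof.
rewrite -(size_basis n e) cardE -(size_map (@mon _ _)).
apply: perm_size; apply: uniq_perm.
- by rewrite map_inj_uniq ?enum_uniq //; apply: mon_inj.
- exact: uniq_basis.
move=> m; rewrite -basis_cover; apply/mapP/idP => [[t _ ->]|/eqP me].
  by rewrite mdeg_mon.
by have [t <-] := monP me; exists t; rewrite ?mem_enum.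
Qed.

Section Ideal.
Variables (n k : nat) (f : 'I_k -> {mpoly CC[n]}).
Implicit Types (p q : {mpoly CC[n]}).

Lemma in_ideal0 : in_ideal f 0.
Proof. by exists (fun=> 0); rewrite big1 // => j _; rewrite mul0r. Qed.

Lemma in_idealD p q : in_ideal f p -> in_ideal f q -> in_ideal f (p + q).
Proof.
move=> [a ->] [b ->]; exists (fun j => a j + b j).
by rewrite -big_split; apply: eq_bigr => j _; rewrite mulrDl.
Qed.

Lemma in_idealMl r p : in_ideal f p -> in_ideal f (r * p).
Proof.
move=> [a ->]; exists (fun j => r * a j).
by rewrite mulr_sumr; apply: eq_bigr => j _; rewrite mulrA.
Qed.

Lemma in_idealZ c p : in_ideal f p -> in_ideal f (c *: p).
Proof. by rewrite -mul_mpolyC; apply: in_idealMl. Qed.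

Lemma in_ideal_sum (I : finType) (F : I -> {mpoly CC[n]}) :
  (forall i, in_ideal f (F i)) -> in_ideal f (\sum_i F i).
Proof. by move=> FI; apply: big_ind => //; [apply: in_ideal0|apply: in_idealD]. Qed.

Lemma in_ideal_gen j : in_ideal f (f j).
Proof.
exists (fun i => (i == j)%:R); rewrite (bigD1 j) //= eqxx mul1r big1 ?addr0 //.
by move=> i /negbTE ->; rewrite mul0r.
Qed.

Lemma in_ideal_lincomb (c : 'I_k -> CC) : in_ideal f (\sum_j c j *: f j).
Proof. by apply: in_ideal_sum => j; apply/in_idealZ/in_ideal_gen. Qed.

Lemma homog_in_ideal_of_monomials e i g :
  (forall t : deg_monom n e, in_ideal f 'X_[mon t]) -> (e <= i)%N ->
  g \is i.-homog -> in_ideal f g.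
Proof.
move=> monI le_ei hg; rewrite (mpolyE g) big_seq.
apply: big_ind => [|p q|m m_supp]; [exact: in_ideal0|exact: in_idealD|].
have [m1 [m2 [-> m1e]]] : exists m1 m2, m = (m1 + m2)%MM /\ mdeg m1 = e.
  by apply: mnm_split; rewrite (dhomog_mf hg m_supp).
apply: in_idealZ; rewrite mpolyXD mulrC; apply: in_idealMl.
by have [t <-] := monP m1e.
Qed.

Variable d : nat.
Hypothesis fhom : forall j, f j \is d.-homog.

(* Only the constant terms of the cofactors reach degree [d]. *)
Lemma in_ideal_mcoeff_low p : in_ideal f p ->
  exists lam : 'rV_k, forall m, (mdeg m <= d)%N -> p@_m = \sum_j lam 0 j * (f j)@_m.
Proof.
move=> [q ->]; exists (\row_j (q j)@_0%MM) => m le_md.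
by rewrite raddf_sum /=; apply: eq_bigr => j _; rewrite mxE (mcoeffM_low _ (fhom j)).
Qed.

Lemma in_ideal_mcoeff_lt p m : in_ideal f p -> (mdeg m < d)%N -> p@_m = 0.
Proof.
move=> /in_ideal_mcoeff_low [lam lamP] lt_md; rewrite lamP ?(ltnW lt_md) //.
by rewrite big1 // => j _; rewrite (dhomog_nemf_coeff (fhom j)) ?mulr0 ?ltn_eqF.
Qed.

Lemma in_ideal_coefrow p : in_ideal f p ->
  exists lam : 'rV_k, coefrow d p = lam *m coefmx d f.
Proof.
move=> /in_ideal_mcoeff_low [lam lamP]; exists lam; apply/rowP => r.
by rewrite !mxE lamP ?mdeg_mon //; apply: eq_bigr => j _; rewrite mxE.
Qed.

Lemma indep_mod_card i a (g : 'I_a -> {mpoly CC[n]}) :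
  indep_mod f i g -> (a <= #|{: deg_monom n i}|)%N.
Proof.
move=> [hg gI]; rewrite leqNgt; apply/negP.
move=> /(row_dependent (coefmx i g)) [u u_neq0 uG0].
have sum0 : \sum_l u 0 l *: g l = 0.
  apply: (coefrow_inj (e := i)); rewrite ?rpred0 ?coefrow0 ?coefrow_lincomb //.
  by apply: rpred_sum => l _; apply/rpredZ/hg.
apply/negP: u_neq0; rewrite negbK; apply/eqP/rowP => l; rewrite mxE.
by apply: (gI (fun l => u 0 l)); rewrite sum0; apply: in_ideal0.
Qed.

Lemma hilb_dim0 i : (forall g, g \is i.-homog -> in_ideal f g) -> hilb_dim f i 0.
Proof.
move=> allI; split; first by exists (fun=> 0); split => [l|c _ []//]; apply: rpred0.
move=> g [hg gI]; suff /eqP : (1 : CC) = 0 by rewrite oner_eq0.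
apply: (gI (fun=> 1)) ord0.
by apply/allI/rpred_sum => l _; apply/rpredZ/hg.
Qed.

Lemma hilb_dim_lt i : (i < d)%N -> hilb_dim f i #|{: deg_monom n i}|.
Proof.
move=> lt_id; split; last by move=> g /indep_mod_card; rewrite ltnn.
exists (fun l => 'X_[mon (enum_val l)]); split=> [l|c cI l0].
  by rewrite dhomogX; apply/eqP/mdeg_mon.
rewrite -(mcoeff_lincomb_monomials_inj c l0 (inj_comp (@mon_inj _ _) enum_val_inj)).
by rewrite (in_ideal_mcoeff_lt cI) // mdeg_mon.
Qed.

(* The pivot columns are the first [k] monomials in enumeration order;
   [nonpivot] enumerates the remaining [N - k]. *)
Section PivotColumns.
Local Notation N := #|{: deg_monom n d}|.
Hypothesis le_kN : (k <= N)%N.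
Hypothesis pivot_free : row_free (colsub (widen_ord le_kN) (coefmx d f)).

Lemma nonpivot_proof (l : 'I_(N - k)) : (k + l < N)%N.
Proof. by have := ltn_ord l; lia. Qed.

Definition nonpivot (l : 'I_(N - k)) : 'I_N := Ordinal (nonpivot_proof l).

Lemma hilb_dim_eq : hilb_dim f d (N - k).
Proof.
split.
  exists (fun l => 'X_[mon (enum_val (nonpivot l))]); split=> [l|c cI l0].
    by rewrite dhomogX; apply/eqP/mdeg_mon.
  have [lam lamF] := in_ideal_coefrow cI.
  have lam0 : lam = 0.
    apply/eqP; rewrite -(mulmx_free_eq0 _ pivot_free) mulmx_colsub -lamF.
    apply/eqP/rowP => r; rewrite !mxE mcoeff_lincomb_monomials big_pred0 // => l.
    rewrite (inj_eq (@mon_inj _ _)) (inj_eq enum_val_inj).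
    by apply/negbTE/eqP => /(congr1 val) /=; have := ltn_ord r; lia.
  move/rowP: lamF => /(_ (nonpivot l0)); rewrite lam0 mul0mx !mxE => <-.
  rewrite mcoeff_lincomb_monomials_inj //.
  apply: inj_comp (@mon_inj _ _) _; apply: inj_comp enum_val_inj _.
  by move=> l1 l2 /(congr1 val) /= /addnI /val_inj.
move=> g [hg gI].
have lt_N : (N < (N - k).+1 + k)%N by lia.
have [u u_neq0] := row_dependent (col_mx (coefmx d g) (coefmx d f)) lt_N.
rewrite -[u]hsubmxK mul_row_col; set u1 := lsubmx u; set u2 := rsubmx u => uGF.
have u1_0 : u1 = 0.
  apply/rowP => l; rewrite [RHS]mxE; apply: (gI (fun l => u1 0 l)).
  suff -> : \sum_l u1 0 l *: g l = \sum_j (- u2) 0 j *: f j by apply: in_ideal_lincomb.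
  apply: (coefrow_inj (e := d)).
  - by apply: rpred_sum => l' _; apply/rpredZ/hg.
  - by apply: rpred_sum => j _; apply/rpredZ/fhom.
  by rewrite !coefrow_lincomb mulNmx; apply/eqP; rewrite -subr_eq0 opprK uGF.
have u2_0 : u2 = 0.
  apply/eqP; rewrite -(mulmx_free_eq0 _ pivot_free) mulmx_colsub.
  by move: uGF; rewrite u1_0 mul0mx add0r => ->; apply/eqP/rowP => r; rewrite !mxE.
by move: u_neq0; rewrite -[u]hsubmxK -/u1 -/u2 u1_0 u2_0 row_mx0 eqxx.
Qed.

End PivotColumns.
End Ideal.

Section MonomialCover.
Variables (n d : nat).
Hypothesis d_ge2 : (2 <= d)%N.
Local Notation x0 := (ord0 : 'I_n.+1).

(* The monomials of degree [d] whose [x0]-exponent is not [d - 1]: they miss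
   the [n] monomials [x0^(d-1) x_v] with [v != x0], yet every monomial of degree
   [d + 1] is one of them times a variable. *)
Definition off_pow : {set deg_monom n.+1 d} := [set t | mon t x0 != d.-1].

Lemma card_off_pow : (#|off_pow| + n <= #|{: deg_monom n.+1 d}|)%N.
Proof.
have powd i : mdeg (U_(x0) *+ d.-1 + U_(lift x0 i))%MM == d.
  by rewrite mdegD mdegMn !mdeg1; apply/eqP; lia.
pose pow_mon i := deg_monom_of (powd i).
have pow_mon_inj : injective pow_mon.
  move=> i1 i2 /(congr1 (@mon _ _)) /addmI /mnmP /(_ (lift x0 i1)).
  by rewrite !mnm1E eqxx; case: eqP => // /lift_inj.
have : [set pow_mon i | i : 'I_n] \subset ~: off_pow.
  apply/subsetP => _ /imsetP [i _ ->]; rewrite !inE negbK mon_deg_monom_of.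
  have /negbTE i_x0 : lift x0 i != x0 by rewrite eq_sym neq_lift.
  by rewrite mnmDE mulmnE !mnm1E eqxx i_x0 mul1n addn0.
move/subset_leq_card; rewrite card_imset // card_ord => le_n.
by rewrite -(cardsC off_pow) leq_add2l.
Qed.

Lemma off_pow_cover (m : deg_monom n.+1 d.+1) :
  exists v, exists2 t, t \in off_pow & (mon t + U_(v))%MM = mon m.
Proof.
suff [v [m_v m_v0]] : exists v, (mon m v != 0)%N /\ ((mon m - U_(v))%MM x0 != d.-1)%N.
  have le_vm : (U_(v) <= mon m)%MM by rewrite lep1mP.
  have mvd : mdeg (mon m - U_(v))%MM == d.
    by have := mdeg_mon m; rewrite -{1}(submK le_vm) mdegD mdeg1 addn1 => -[->].
  exists v, (deg_monom_of mvd); last by rewrite mon_deg_monom_of submK.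
  by rewrite inE mon_deg_monom_of.
case: (boolP ((mon m x0 != 0) && (mon m x0 != d))%N) => [/andP [m0 md]|m0d].
  by exists x0; split => //; rewrite mnmBE mnm1E eqxx; move: m0 md; lia.
case: (pickP (fun v => (v != x0) && (mon m v != 0)%N)) => [v /andP [v_ne m_v]|m_only].
  by exists v; split => //; rewrite mnmBE mnm1E (negbTE v_ne) subn0; move: m0d; lia.
have := mdeg_mon m; rewrite mdegE (bigD1 x0) //= big1 => [|v v_ne]; first lia.
by have /= := m_only v; rewrite v_ne /= => /negbFE /eqP.
Qed.

Lemma deg_monom_cover k : (#|{: deg_monom n.+1 d}| < k + n.+1)%N ->
  exists T : 'I_k -> deg_monom n.+1 d, forall m : deg_monom n.+1 d.+1,
    exists jv : 'I_k * 'I_n.+1, (mon (T jv.1) + U_(jv.2))%MM = mon m.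
Proof.
move=> lt_N; have le_k : (#|off_pow| <= k)%N by have := card_off_pow; lia.
have x0d : mdeg (U_(x0) *+ d)%MM == d by rewrite mdegMn mdeg1 mul1n.
exists (fun j => nth (deg_monom_of x0d) (enum off_pow) j) => m.
have [v [t t_off tvm]] := off_pow_cover m.
have lt_tk : (index t (enum off_pow) < k)%N.
  by apply: leq_trans le_k; rewrite cardE index_mem mem_enum.
by exists (Ordinal lt_tk, v); rewrite /= nth_index ?mem_enum.
Qed.

End MonomialCover.

Lemma sum_indicator (R : ringType) (T : finType) (P : pred T) (t0 : T) :
  \sum_(t | P t) ((t == t0)%:R : R) = (P t0)%:R.
Proof.
rewrite big_mkcond (bigD1 t0) //= eqxx big1 ?addr0 => [|t /negbTE ->].
  by case: (P t0).
by case: (P t).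
Qed.

(* A polynomial over Q that is nonzero at some rational point [w] is nonzero,
   hence does not vanish at algebraically independent numbers. *)
Lemma alg_indep_det_neq0 (I : finType) (z : I -> CC) s
    (M : 'M[{mpoly rat[#|I|]}]_s) (w : 'I_#|I| -> rat) :
  alg_indep_Q z -> \det (map_mx (meval w) M) != 0 ->
  \det (map_mx (fun P => (map_mpoly ratr P).@[fun l => z (enum_val l)]) M) != 0.
Proof.
move=> z_indep; rewrite (det_map_mx (meval w)) => Mw_neq0.
have /z_indep : \det M != 0 by apply: contraNneq Mw_neq0 => ->; rewrite raddf0.
have -> : map_mx (fun P => (map_mpoly ratr P).@[fun l => z (enum_val l)]) M
    = map_mx (meval (fun l => z (enum_val l))) (map_mx (map_mpoly ratr) M).
  by apply/matrixP => i j; rewrite !mxE.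
by rewrite (det_map_mx (meval _)) (det_map_mx (map_mpoly _)).
Qed.

Section Generic.
Variables (n d k : nat) (f : 'I_k -> {mpoly CC[n]}).
Hypothesis fhom : forall j, f j \is d.-homog.
Local Notation coef_index := ('I_k * deg_monom n d)%type.
Let z (jt : coef_index) : CC := (f jt.1)@_(mon jt.2).
Hypothesis f_generic : alg_indep_Q z.

Definition coef_var j (t : deg_monom n d) : {mpoly rat[#|{: coef_index}|]} :=
  'X_(enum_rank (j, t)).

Definition generic_eval (P : {mpoly rat[#|{: coef_index}|]}) : CC :=
  (map_mpoly ratr P).@[fun l => z (enum_val l)].

Lemma generic_eval_var j t : generic_eval (coef_var j t) = (f j)@_(mon t).
Proof. by rewrite /generic_eval map_mpolyX mevalXU enum_rankK. Qed.

Lemma generic_eval_sum (J : finType) (P : pred J) F :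
  generic_eval (\sum_(t | P t) F t) = \sum_(t | P t) generic_eval (F t).
Proof.
by apply: big_morph => [P1 P2|]; rewrite /generic_eval ?raddfD ?raddf0.
Qed.

Lemma meval_coef_var w j t : (coef_var j t).@[w] = w (enum_rank (j, t)).
Proof. exact: mevalXU. Qed.

Lemma generic_unitmx s (M : 'M_s) w :
  map_mx (meval w) M = 1%:M -> map_mx generic_eval M \in unitmx.
Proof.
move=> Mw1; rewrite unitmxE unitfE.
by apply: (alg_indep_det_neq0 (w := w) f_generic); rewrite Mw1 det1 oner_neq0.
Qed.

Lemma pivot_free (le_kN : (k <= #|{: deg_monom n d}|)%N) :
  row_free (colsub (widen_ord le_kN) (coefmx d f)).
Proof.
pose pivot j : deg_monom n d := enum_val (widen_ord le_kN j).
have pivot_inj : injective pivot.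
  by move=> j1 j2 /enum_val_inj /(congr1 val) /= /val_inj.
pose M := \matrix_(j, r) coef_var j (pivot r).
pose w (l : 'I_#|{: coef_index}|) : rat := ((enum_val l).2 == pivot (enum_val l).1)%:R.
have -> : colsub (widen_ord le_kN) (coefmx d f) = map_mx generic_eval M.
  by apply/matrixP => j r; rewrite !mxE generic_eval_var.
rewrite row_free_unit; apply: (generic_unitmx (w := w)); apply/matrixP => j r.
by rewrite !mxE meval_coef_var /w enum_rankK /= (inj_eq pivot_inj) eq_sym.
Qed.

Section Cover.
Variables (T : 'I_k -> deg_monom n d) (ph : deg_monom n d.+1 -> 'I_k * 'I_n).
Hypothesis phP : forall m, (mon (T (ph m).1) + U_((ph m).2))%MM = mon m.
Local Notation N1 := #|{: deg_monom n d.+1}|.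

Definition cover_form (r : 'I_N1) : {mpoly CC[n]} :=
  'X_((ph (enum_val r)).2) * f (ph (enum_val r)).1.

Lemma cover_form_homog r : cover_form r \is d.+1.-homog.
Proof.
have Xv_homog : ('X_((ph (enum_val r)).2) : {mpoly CC[n]}) \is 1.-homog.
  by rewrite dhomogX; apply/eqP/mdeg1.
by rewrite -add1n; apply: dhomogM.
Qed.

Lemma cover_unitmx : coefmx d.+1 cover_form \in unitmx.
Proof.
pose M : 'M_N1 := \matrix_(r, c) \sum_(t : deg_monom n d |
    (mon t + U_((ph (enum_val r)).2) == mon (enum_val c))%MM)
  coef_var (ph (enum_val r)).1 t.
(* At [f j = x^(T j)], row [r] is by [phP] the coefficient row of the [r]-th
   monomial of degree [d + 1]. *)
pose w (l : 'I_#|{: coef_index}|) : rat := ((enum_val l).2 == T (enum_val l).1)%:R.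
have -> : coefmx d.+1 cover_form = map_mx generic_eval M.
  apply/matrixP => r c; rewrite !mxE (mcoeffXvM (d := d)) ?mdeg_mon // generic_eval_sum.
  by apply: eq_bigr => t _; rewrite generic_eval_var.
apply: (generic_unitmx (w := w)); apply/matrixP => r c; rewrite !mxE raddf_sum /=.
under eq_bigr => t _ do rewrite meval_coef_var /w enum_rankK /=.
by rewrite sum_indicator phP (inj_eq (@mon_inj _ _)) (inj_eq enum_val_inj).
Qed.

Lemma monomial_succ_in_ideal (m : deg_monom n d.+1) : in_ideal f 'X_[mon m].
Proof.
pose u : 'rV_N1 := delta_mx 0 (enum_rank m) *m invmx (coefmx d.+1 cover_form).
have -> : 'X_[mon m] = \sum_r u 0 r *: cover_form r.
  apply: (coefrow_inj (e := d.+1)).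
  - by rewrite dhomogX; apply/eqP/mdeg_mon.
  - by apply: rpred_sum => r _; apply/rpredZ/cover_form_homog.
  by rewrite coefrow_monomial coefrow_lincomb mulmxKV ?cover_unitmx.
by apply: in_ideal_sum => r; apply/in_idealZ/in_idealMl/in_ideal_gen.
Qed.

End Cover.
End Generic.

Lemma hilb_dim_gt n d k (f : 'I_k -> {mpoly CC[n.+1]}) i :
  (2 <= d)%N -> (#|{: deg_monom n.+1 d}| < k + n.+1)%N -> generic_forms d f ->
  (d < i)%N -> hilb_dim f i 0.
Proof.
move=> d_ge2 lt_N [fhom f_generic] lt_di; apply: hilb_dim0 => g.
have [T /fin_all_exists [ph phP]] := deg_monom_cover d_ge2 lt_N.
exact: homog_in_ideal_of_monomials (monomial_succ_in_ideal fhom f_generic phP) lt_di.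
Qed.

Lemma bin_sym a b : 'C(a + b, a) = 'C(a + b, b).
Proof. by rewrite -{2}(addnK b a) bin_sub // leq_addl. Qed.

(* With [N = C(n + d, d)]: [(n + d + 1) N = (d + 1) C(n + d + 1, n)] and
   [k >= N - n]. *)
Lemma bin_succ_lt_mul n d k : (2 <= n)%N -> (2 <= d)%N ->
  ('C(n + d, d) < k + n.+1)%N -> ('C(n + d.+1, n) < k * n.+1)%N.
Proof.
move=> n_ge2 d_ge2 lt_Nk; set N := 'C(n + d, d) in lt_Nk.
have pascal : ((n + d.+1) * N = d.+1 * 'C(n + d.+1, n))%N.
  by rewrite /N bin_sym -mul_bin_diag addnS.
have N_ge : (n.+2 * n.+1 <= 2 * N)%N.
  have : ('C(n + 2, n) <= N)%N by rewrite /N -bin_sym leq_bin2l // leq_add2l.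
  rewrite bin_sym addn2 => le_N.
  by have := mul_bin_diag n.+2 1; rewrite /= bin1; lia.
suff : (d.+1 * 'C(n + d.+1, n) < d.+1 * (k * n.+1))%N by rewrite ltn_pmul2l.
rewrite -pascal.
have lt_dN : (d.+1 * n.+1 < d * N)%N by nia.
nia.
Qed.

Lemma one_sub_Xn_expE d k : exists r : {poly int},
  (1 - 'X^d) ^+ k = 1 - 'X^d *+ k + 'X^d * 'X^d * r.
Proof.
elim: k => [|k [r IH]]; first by exists 0; rewrite expr0 mulr0n subr0 mulr0 addr0.
by exists (r - r * 'X^d + k%:R); rewrite exprS IH mulrS; ring.
Qed.

Lemma coef_one_sub_Xn_exp d k j : (0 < d)%N -> (j < d + d)%N ->
  ((1 - 'X^d) ^+ k : {poly int})`_j = (j == 0%N)%:R - k%:Z * (j == d)%:R.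
Proof.
move=> d_gt0 lt_j; have [r ->] := one_sub_Xn_expE d k.
rewrite coefD coefB coef1 coefMn coefXn -exprD coefXnM lt_j addr0.
congr (_ - _); case: (j == d); rewrite ?mulr1 ?mulr0 ?mul0rn ?natz //.
Qed.

(* Below degree [2d] only the terms [1] and [-k t^d] of [(1 - t^d)^k] matter. *)
Lemma series_coef_small n d k i : (0 < d)%N -> (i < d + d)%N ->
  series_coef n.+1 d k i =
  ('C(n + i, n))%:Z
  - (if (d <= i)%N then k%:Z * ('C(n + (i - d), n))%:Z else 0).
Proof.
move=> d_gt0 lt_i; rewrite /series_coef /=.
under eq_bigr => j _.
  rewrite coef_one_sub_Xn_exp //; last by have := ltn_ord j; lia.
  rewrite mulrBl.
over.
rewrite sumrB big_ord_recl /= mul1r subn0 big1 ?addr0 => [|j _]; last by rewrite mul0r.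
congr (_ - _); case: leqP => [le_di|lt_id].
  have lt_d : (d < i.+1)%N by lia.
  rewrite (bigD1 (Ordinal lt_d)) //= eqxx mulr1 big1 ?addr0 // => j /negbTE j_ne.
  by rewrite -(inj_eq val_inj) /= in j_ne; rewrite j_ne mulr0 mul0r.
rewrite big1 // => j _; have /negbTE -> : nat_of_ord j != d.
  by have := ltn_ord j; lia.
by rewrite mulr0 mul0r.
Qed.

Lemma series_coef_lt n d k i : (i < d)%N -> series_coef n.+1 d k i = ('C(i + n, i))%:Z.
Proof.
move=> lt_id; rewrite series_coef_small; try lia.
by rewrite leqNgt lt_id subr0 addnC bin_sym.
Qed.

Lemma ceil_coef_pos (a : nat -> int) i : (forall j, (j <= i)%N -> 0 < a j) ->
  ceil_coef a i = a i.
Proof.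
move=> a_pos; rewrite /ceil_coef; case: forallP => // -[] j.
by apply: a_pos; rewrite -ltnS.
Qed.

Lemma ceil_coef_nonpos (a : nat -> int) i j : (j <= i)%N -> a j <= 0 ->
  ceil_coef a i = 0.
Proof.
move=> le_ji aj_le0; rewrite /ceil_coef.
case: forallP => // /(_ (Ordinal (le_ji : (j < i.+1)%N))).
by rewrite /= Order.TotalTheory.ltNge aj_le0.
Qed.

Section CeilSeries.
Variables (n d k : nat).
Hypothesis d_gt0 : (0 < d)%N.

Lemma ceil_series_lt i : (i < d)%N ->
  ceil_coef (series_coef n.+1 d k) i = ('C(i + n, i))%:Z.
Proof.
move=> lt_id; rewrite ceil_coef_pos ?series_coef_lt // => j le_ji.
by rewrite series_coef_lt ?ltz_nat ?bin_gt0 ?leq_addr //; lia.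
Qed.

Lemma series_coef_d : series_coef n.+1 d k d = ('C(n + d, d))%:Z - k%:Z.
Proof.
by rewrite series_coef_small ?leqnn ?subnn ?addn0 ?binn ?mulr1 -?bin_sym //; lia.
Qed.

Lemma ceil_series_d : (k <= 'C(n + d, d))%N ->
  ceil_coef (series_coef n.+1 d k) d = ('C(n + d, d) - k)%N%:Z.
Proof.
move=> le_kN; rewrite -subzn //; case: (ltnP k 'C(n + d, d)) => [lt_kN|le_Nk].
  rewrite ceil_coef_pos ?series_coef_d // => j; rewrite leq_eqVlt.
  case/predU1P => [->|lt_jd]; first by rewrite series_coef_d subr_gt0 ltz_nat.
  by rewrite series_coef_lt ?ltz_nat ?bin_gt0 ?leq_addr.
have k_eq : k = 'C(n + d, d) by apply/eqP; rewrite eqn_leq le_kN le_Nk.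
rewrite (ceil_coef_nonpos (leqnn d)) ?series_coef_d k_eq ?subrr //.
Qed.

Lemma ceil_series_gt i : (2 <= n)%N -> (2 <= d)%N ->
  ('C(n + d, d) < k + n.+1)%N -> (d < i)%N ->
  ceil_coef (series_coef n.+1 d k) i = 0.
Proof.
move=> n_ge2 d_ge2 lt_Nk lt_di; apply: (ceil_coef_nonpos lt_di).
rewrite series_coef_small ?leqnSn ?subSn ?subnn ?addn1; try lia.
rewrite binSn subr_le0 -PoszM lez_nat ltnW //.
exact: bin_succ_lt_mul.
Qed.

End CeilSeries.

Theorem mainTheorem2 (n d k : nat) :
  (4 <= n)%N -> (2 <= d)%N ->
  ('C(n + d - 1, d) - n < k)%N -> (k <= 'C(n + d - 1, d))%N ->
  forall f : 'I_k -> {mpoly CC[n]}, generic_forms d f ->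
  forall i : nat, exists a : nat,
    hilb_dim f i a /\ a%:Z = ceil_coef (series_coef n d k) i.
Proof.
case: n => [//|n] n_ge4 d_ge2; rewrite addSn subn1 /= => lt_Nk le_kN f f_gen i.
have card_N : #|{: deg_monom n.+1 d}| = 'C(n + d, d) by rewrite card_deg_monom addnC.
have [fhom f_indep] := f_gen.
case: (ltngtP i d) => [lt_id|lt_di|->].
- exists #|{: deg_monom n.+1 i}|; split; first exact: (hilb_dim_lt fhom lt_id).
  by rewrite ceil_series_lt ?card_deg_monom //; lia.
- exists 0%N; split; last by rewrite ceil_series_gt //; lia.
  by apply: (hilb_dim_gt d_ge2 _ f_gen lt_di); rewrite card_N; lia.
- have le_kcard : (k <= #|{: deg_monom n.+1 d}|)%N by rewrite card_N.
  exists (#|{: deg_monom n.+1 d}| - k)%N; split.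
    exact: (hilb_dim_eq fhom (pivot_free f_indep le_kcard)).
  by rewrite card_N ceil_series_d //; lia.
Qed.
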